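(* Let $m\ge2$, $k\ge1$, $n\ge1$, $\mathcal{A}\in\mathbb{R}_+^{[m,n]}$ and $\mathcal{B}\in\mathbb{R}_+^{[k,n]}$ with $r_i(\mathcal{B})\neq0$ for all $i\in[n]$. Then \[\min_{i\in[n]}\frac{r_i(\mathcal{A}\mathcal{B})}{(r_i(\mathcal{B}))^{m-1}}\le\rho(\mathcal{A})\le\max_{i\in[n]}\frac{r_i(\mathcal{A}\mathcal{B})}{(r_i(\mathcal{B}))^{m-1}}.\]
   Context: $[n]=\{1,\ldots,n\}$. $\mathbb{C}^{[m,n]}$ (resp. $\mathbb{R}_+^{[m,n]}$) denotes the set of order $m$, dimension $n$ tensors $\mathcal{A}=(a_{i_1\cdots i_m})$, $i_j\in[n]$, with complex (resp. nonnegative real) entries; for $k=1$ these are vectors in $\mathbb{C}^n$ (resp. nonnegative vectors). For a tensor $\mathcal{T}=(t_{i_1\cdots i_p})$ of order $p$ and dimension $n$, $r_i(\mathcal{T})=\sum_{i_2,\ldots,i_p=1}^n|t_{ii_2\cdots i_p}|$ (for $p=1$, $r_i(\mathcal{T})=|t_i|$). General product: for $\mathcal{A}\in\mathbb{C}^{[m,n]}$ ($m\ge2$), $\mathcal{B}\in\mathbb{C}^{[k,n]}$ ($k\ge1$), $\mathcal{A}\mathcal{B}=(c_{i\alpha_1\cdots\alpha_{m-1}})$ is the order $(m-1)(k-1)+1$, dimension $n$ tensor with $c_{i\alpha_1\cdots\alpha_{m-1}}=\sum_{i_2,\ldots,i_m=1}^n a_{ii_2\cdots i_m}b_{i_2\alpha_1}\cdots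 b_{i_m\alpha_{m-1}}$, $i\in[n]$, $\alpha_j\in[n]^{k-1}$ (where $b_{j\alpha}$ with $\alpha=(j_2,\ldots,j_k)$ means $b_{jj_2\cdots j_k}$). Eigenvalues: for $\mathcal{A}\in\mathbb{C}^{[m,n]}$ and $x\in\mathbb{C}^n$, $(\mathcal{A}x^{m-1})_i=\sum_{i_2,\ldots,i_m=1}^n a_{ii_2\cdots i_m}x_{i_2}\cdots x_{i_m}$; $\lambda\in\mathbb{C}$ is an eigenvalue of $\mathcal{A}$ if there is a nonzero $x\in\mathbb{C}^n$ with $\mathcal{A}x^{m-1}=\lambda x^{[m-1]}$, where $x^{[m-1]}=(x_1^{m-1},\ldots,x_n^{m-1})^{\mathrm T}$. The spectral radius $\rho(\mathcal{A})$ is the maximum modulus of the eigenvalues of $\mathcal{A}$. *)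

From HB Require Import structures.
From mathcomp Require Import all_boot all_order all_algebra.
From mathcomp Require Import complex.
From mathcomp Require Import all_classical all_reals.
Set Implicit Arguments. Unset Strict Implicit. Unset Printing Implicit Defensive.
Import Order.TTheory GRing.Theory Num.Theory.
Local Open Scope ring_scope.

(* A tensor of order p and dimension n with entries in T is represented as
   'I_n -> J -> T, where the first index i ranges over 'I_n and the
   remaining (p-1) indices are collected in a finite index type J. *)
Definition tensor (T : Type) (p n : nat) := 'I_n -> (p.-1).-tuple 'I_n -> T.

Definition rowsum (R : numDomainType) (n : nat) (J : finType)
  (T : 'I_n -> J -> R) (i : 'I_n) : R := \sum_(j : J) `|T i j|.

(* General product AB of A (order m) and B (order k): an order
   (m-1)(k-1)+1 tensor whose trailing index is (alpha_1, ..., alpha_{m-1}),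
   each alpha_j in [n]^{k-1}:
   c_{i alpha_1..alpha_{m-1}} = sum_{i_2..i_m} a_{i i_2..i_m} b_{i_2 alpha_1} ... b_{i_m alpha_{m-1}} *)
Definition tprod (R : semiRingType) (m k n : nat) (A : tensor R m n) (B : tensor R k n)
  : 'I_n -> (m.-1).-tuple ((k.-1).-tuple 'I_n) -> R :=
  fun i alpha => \sum_(t : (m.-1).-tuple 'I_n)
      A i t * \prod_(j < m.-1) B (tnth t j) (tnth alpha j).

Definition tapply (C : semiRingType) (m n : nat) (A : tensor C m n) (x : 'I_n -> C) (i : 'I_n) : C :=
  \sum_(t : (m.-1).-tuple 'I_n) A i t * \prod_(j < m.-1) x (tnth t j).

Definition is_eigenvalue (C : ringType) (m n : nat) (A : tensor C m n) (lambda : C) : Prop :=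
  exists x : 'I_n -> C, (exists i, x i != 0) /\
    forall i, tapply A x i = lambda * x i ^+ (m.-1).

Definition tensorC (R : rcfType) (m n : nat) (A : tensor R m n) : tensor R[i] m n :=
  fun i t => (A i t)%:C%C.

(* spectral radius of a real tensor: the largest modulus of the (complex)
   eigenvalues of A (a maximum, since the eigenvalue set is finite and nonempty) *)
Definition spectral_radius (R : realType) (m n : nat) (A : tensor R m n) : R :=
  sup [set ComplexField.Normc.normc lambda | lambda in [set l | is_eigenvalue (tensorC A) l]]%classic.

From HB Require Import structures.
From mathcomp Require Import all_boot all_order all_algebra.
From mathcomp Require Import complex.
From mathcomp Require Import all_classical all_reals all_analysis.
From mathcomp Require Import lra.
Import Order.TTheory GRing.Theory Num.Theory.
Import numFieldTopology.Exports numFieldNormedType.Exports ComplexField.Normc.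
Local Open Scope ring_scope.
Local Open Scope classical_set_scope.
Set Implicit Arguments. Unset Strict Implicit. Unset Printing Implicit Defensive.

(* With d_i = r_i(B) > 0, nonnegativity gives r_i(AB) = (A d^{m-1})_i, so the
   bounds are Collatz-Wielandt quotients of A at d.  If A z^{m-1} = l z^[m-1]
   then |l| |z|^[m-1] <= A |z|^{m-1}, and comparing |z| with d at an index
   maximizing |z_j| / d_j gives |l| <= max_i (A d^{m-1})_i / d_i^{m-1}.
   For the lower bound, c = min_i (A d^{m-1})_i / d_i^{m-1} satisfies
   c d^[m-1] <= A d^{m-1}.  For a positive tensor the supremum of the mu
   admitting a vector x of the simplex with mu x^[m-1] <= A x^{m-1} is attained
   by compactness, and it is an eigenvalue: a strict inequality in one row can
   be spread to every row by enlarging that coordinate, after which mu can be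
   increased.  A nonnegative A is the limit of the positive A + 1/(k+1), and a
   cluster point of their eigenpairs is an eigenpair of A with eigenvalue at
   least c. *)

Section TensorApply.
Variables (R : numDomainType) (n p : nat).
Implicit Types (A B : tensor R p.+1 n) (x y : 'I_n -> R).

Definition simplex x := (forall j, 0 <= x j) /\ \sum_j x j = 1.

Definition subeigen A mu x := forall i, mu * x i ^+ p <= tapply A x i.

Definition supereigen A mu x := forall i, tapply A x i <= mu * x i ^+ p.

Definition eigenpair A mu x := forall i, tapply A x i = mu * x i ^+ p.

Definition tshift A e : tensor R p.+1 n := fun i t => A i t + e.

Lemma tapplyZ A s x i : tapply A (fun j => s * x j) i = s ^+ p * tapply A x i.
Proof.
rewrite /tapply mulr_sumr; apply: eq_bigr => t _.
by rewrite big_split /= prodr_const card_ord mulrCA.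
Qed.

Lemma tapply_tshift A e x i :
  tapply (tshift A e) x i = tapply A x i + e * tapply (m := p.+1) (fun _ _ => 1) x i.
Proof.
rewrite /tapply mulr_sumr -big_split; apply: eq_bigr => t _.
by rewrite mul1r mulrDl.
Qed.

Lemma tapply_ge0 A x i :
  (forall i t, 0 <= A i t) -> (forall j, 0 <= x j) -> 0 <= tapply A x i.
Proof.
move=> A0 x0; apply: sumr_ge0 => t _.
by apply: mulr_ge0 => //; apply: prodr_ge0.
Qed.

Lemma ler_tapply A B x y i :
  (forall i t, 0 <= A i t) -> (forall i t, A i t <= B i t) ->
  (forall j, 0 <= x j) -> (forall j, x j <= y j) ->
  tapply A x i <= tapply B y i.
Proof.
move=> A0 AB x0 xy; apply: ler_sum => t _.
apply: ler_pM => //; first exact: prodr_ge0.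
by apply: ler_prod => j _; rewrite x0 xy.
Qed.

Lemma ltr_tapply A x y i i0 : (0 < p)%N ->
  (forall i t, 0 < A i t) -> (forall j, 0 <= x j) -> (forall j, x j <= y j) ->
  x i0 < y i0 -> tapply A x i < tapply A y i.
Proof.
move=> p0 A0 x0 xy xy0.
pose t0 := nseq_tuple p i0.
have prod_t0 z : \prod_(j < p) z (tnth t0 j) = z i0 ^+ p.
  by rewrite -[in RHS](card_ord p) -prodr_const; apply: eq_bigr => j _; rewrite tnth_nseq.
rewrite /tapply (bigD1 t0) //= [ltRHS](bigD1 t0) //=.
apply: ltr_leD.
  by rewrite !prod_t0 ltr_pM2l // ltrXn2r ?gtn_eqF.
apply: ler_sum => t _; apply: ler_wpM2l; first exact: ltW.
by apply: ler_prod => j _; rewrite x0 xy.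
Qed.

Lemma tshift_ge0 A e :
  (forall i t, 0 <= A i t) -> 0 <= e -> forall i t, 0 <= tshift A e i t.
Proof. by move=> A0 e0 i t; rewrite addr_ge0. Qed.

Lemma le_tshift A e i t : 0 <= e -> A i t <= tshift A e i t.
Proof. by rewrite lerDl. Qed.

Lemma ler_tshift A e e' i t : e <= e' -> tshift A e i t <= tshift A e' i t.
Proof. by rewrite lerD2l. Qed.

Lemma le_subeigen A mu mu' x :
  mu' <= mu -> (forall j, 0 <= x j) -> subeigen A mu x -> subeigen A mu' x.
Proof.
move=> le_mu x0 hx i; apply: le_trans (hx i).
by rewrite ler_wpM2r // exprn_ge0.
Qed.

End TensorApply.

Section CollatzWielandt.
Variables (R : realFieldType) (n p : nat).
Implicit Types (A : tensor R p.+1 n) (x y d : 'I_n -> R).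

Lemma simplex_le1 x j : simplex x -> x j <= 1.
Proof.
move=> [x0 <-]; rewrite (bigD1 j) //= lerDl.
by apply: sumr_ge0 => i _.
Qed.

Lemma simplex_gt0 x : simplex x -> exists j, 0 < x j.
Proof.
move=> [x0 x1]; have : \sum_j x j != 0 by rewrite x1 oner_neq0.
rewrite psumr_eq0 // => /allPn [j _ xj].
by exists j; rewrite lt0r xj x0.
Qed.

Lemma subeigen_normalize A mu x : (forall j, 0 <= x j) -> (exists j, 0 < x j) ->
  subeigen A mu x -> exists2 y, simplex y & subeigen A mu y.
Proof.
set s := \sum_j x j => x0 [j0 xj0] hx.
have s0 : 0 < s.
  apply: lt_le_trans xj0 _; rewrite /s (bigD1 j0) //= lerDl.
  by apply: sumr_ge0 => i _; exact: x0.
have s'0 : 0 <= s^-1 by rewrite invr_ge0 ltW.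
exists (fun j => s^-1 * x j); first split.
- by move=> j; apply: mulr_ge0.
- by rewrite -mulr_sumr mulVf // gt_eqF.
- move=> i; rewrite tapplyZ exprMn mulrCA.
  by apply: ler_wpM2l; [exact: exprn_ge0 | exact: hx].
Qed.

Lemma collatz_wielandt A mu x d :
  (forall i t, 0 <= A i t) -> (forall j, 0 <= x j) -> (exists j, 0 < x j) ->
  (forall j, 0 < d j) -> subeigen A mu x -> exists i, mu * d i ^+ p <= tapply A d i.
Proof.
move=> A0 x0 [j0 xj0] d0 hx.
have [i _ imax] := @arg_maxP _ _ _ j0 predT (fun j => x j / d j) isT.
set w := x i / d i in imax.
have w0 : 0 < w by apply: lt_le_trans (imax j0 isT); exact: divr_gt0.
have x_le j : x j <= w * d j by rewrite -ler_pdivrMr //; exact: imax.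
have xi : x i = w * d i by rewrite /w divfK // gt_eqF.
exists i; have := le_trans (hx i) (ler_tapply i A0 (fun _ _ => lexx _) x0 x_le).
by rewrite tapplyZ xi exprMn mulrCA ler_pM2l // exprn_gt0.
Qed.

Lemma subeigen_le_rowsum A mu x : (forall i t, 0 <= A i t) -> simplex x ->
  subeigen A mu x -> mu <= \sum_i tapply A (fun _ => 1) i.
Proof.
move=> A0 sx hx.
have [x0 _] := sx.
have [i hi] := collatz_wielandt A0 x0 (simplex_gt0 sx) (fun _ => ltr01) hx.
rewrite expr1n mulr1 in hi; apply: le_trans hi _.
rewrite (bigD1 i) //= lerDl; apply: sumr_ge0 => j _.
by apply: tapply_ge0 => // _; exact: ler01.
Qed.

End CollatzWielandt.

Lemma exists_gt0_exprD_lt (R : realType) (mu a T : R) (p : nat) :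
  mu * a ^+ p < T -> exists2 d, 0 < d & mu * (a + d) ^+ p < T.
Proof.
move=> hT.
have cD : a + d @[d --> (0 : R)] --> a + 0 by exact: (cvgD (cvg_cst a) cvg_id).
have cX : (a + d) ^+ p @[d --> (0 : R)] --> (a + 0) ^+ p.
  exact: (cvg_comp _ _ cD (@exprn_continuous R p (a + 0))).
have cg : mu * (a + d) ^+ p @[d --> (0 : R)^'+] --> mu * a ^+ p.
  by rewrite -[in a ^+ p](addr0 a); apply: cvg_at_right_filter; exact: cvgMl_tmp.
near (0 : R)^'+ => d.
exists d; near: d; [exact: nbhs_right_gt | exact: cvgr_lt cg _ hT].
Unshelve. all: by end_near. Qed.

Section PositiveImprovement.
Variables (R : realType) (n p : nat) (A : tensor R p.+1 n).
Hypotheses (A_gt0 : forall i t, 0 < A i t) (p_gt0 : (0 < p)%N).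
Implicit Types (x y : 'I_n -> R).

Let A_ge0 i t : 0 <= A i t. Proof. exact: ltW. Qed.

Lemma subeigen_strict_gt mu y : (forall j, 0 <= y j) ->
  (forall i, mu * y i ^+ p < tapply A y i) -> exists2 mu', mu < mu' & subeigen A mu' y.
Proof.
move=> y0 hy.
pose gap i := (tapply A y i - mu * y i ^+ p) / (y i ^+ p + 1).
have yp0 i : 0 <= y i ^+ p by exact: exprn_ge0.
pose e := \big[Num.min/1]_i gap i.
have e0 : 0 < e.
  by apply: lt_bigmin => // i _; apply: divr_gt0; [rewrite subr_gt0 | exact: ltr_wpDl].
exists (mu + e); first by rewrite ltrDl.
move=> i; have := bigmin_le 1 i gap; rewrite -/e ler_pdivlMr; last exact: ltr_wpDl.
have := yp0 i; nra.
Qed.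

(* Enlarging the coordinate of a strict row keeps that row strict and, since
   every entry of A is positive, makes all the other rows strict. *)
Lemma subeigen_spread mu x i0 : (forall j, 0 <= x j) -> subeigen A mu x ->
  mu * x i0 ^+ p < tapply A x i0 ->
  exists y, [/\ forall j, 0 <= y j, 0 < y i0 & forall i, mu * y i ^+ p < tapply A y i].
Proof.
move=> x0 hx lt_i0.
have [d d0 hd] := exists_gt0_exprD_lt lt_i0.
pose y j := x j + (if j == i0 then d else 0).
have yi0 : y i0 = x i0 + d by rewrite /y eqxx.
have xy j : x j <= y j by rewrite /y lerDl; case: eqP => // _; exact: ltW.
have xy0 : x i0 < y i0 by rewrite yi0 ltrDl.
have y0 j : 0 <= y j by exact: le_trans (x0 j) (xy j).
exists y; split => //; first exact: le_lt_trans (x0 i0) xy0.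
move=> i; have [-> | ne] := eqVneq i i0.
  by rewrite yi0; apply: lt_le_trans hd (ler_tapply _ A_ge0 (fun _ _ => lexx _) x0 xy).
have -> : y i = x i by rewrite /y (negbTE ne) addr0.
exact: le_lt_trans (hx i) (ltr_tapply _ p_gt0 A_gt0 x0 xy xy0).
Qed.

Lemma subeigen_improve mu x i0 : simplex x -> subeigen A mu x ->
  mu * x i0 ^+ p < tapply A x i0 ->
  exists2 mu', mu < mu' & exists2 y, simplex y & subeigen A mu' y.
Proof.
move=> [x0 _] hx lt_i0.
have [y [y0 yi0 hy]] := subeigen_spread x0 hx lt_i0.
have [mu' lt_mu hy'] := subeigen_strict_gt y0 hy.
by exists mu' => //; apply: (subeigen_normalize y0 _ hy'); exists i0.
Qed.

End PositiveImprovement.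

Lemma ler_add_natSinv (R : archiRealFieldType) (a b c : R) :
  (forall N : nat, a <= b + N.+1%:R^-1 * c) -> a <= b.
Proof.
move=> h; apply/ler_addgt0Pr => e e0; apply: le_trans (h (Num.trunc (c / e))) _.
rewrite lerD2l mulrC ler_pdivrMr ?ltr0Sn // mulrC -ler_pdivrMr //.
exact/ltW/truncnS_gt.
Qed.

Lemma cluster_closed (T : topologicalType) (F : set_system T) (C : set T) (x : T) :
  cluster F x -> closed C -> F C -> C x.
Proof.
move=> clx cC FC; rewrite (closure_id C).1 //.
by move=> B xB; exact: clx.
Qed.

Lemma closed_ler (T : topologicalType) (R : realFieldType) (f g : T -> R) :
  continuous f -> continuous g -> closed [set x | f x <= g x].
Proof.
move=> cf cg.
have -> : [set x | f x <= g x] = (fun x => g x - f x) @^-1` [set r | 0 <= r].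
  by apply/seteqP; split => x /=; rewrite subr_ge0.
apply: preimage_closed; last exact: closed_ge.
by move=> x _; exact: (continuousB (cg x) (cf x)).
Qed.

Section SimplexCompactness.
Variables (R : realType) (n p : nat).

Lemma continuous_tapply (A : tensor R p.+1 n) i :
  continuous (fun v : 'rV[R]_n => tapply A (v ord0) i).
Proof.
apply: continuous_big => [|t _]; first exact: add_continuous.
have cprod : continuous (fun v : 'rV[R]_n => \prod_(j < p) v ord0 (tnth t j)).
  apply: continuous_big => [|j _]; first exact: mul_continuous.
  exact: coord_continuous.
have ccst : continuous (fun _ : 'rV[R]_n => A i t) by exact: cst_continuous.
by move=> v; exact: (continuousM (ccst v) (cprod v)).
Qed.

Let continuous_tapply_fst (A : tensor R p.+1 n) i :
  continuous (fun w : 'rV[R]_n * R => tapply A (w.1 ord0) i).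
Proof.
move=> w; apply: (cvg_comp fst (fun v : 'rV[R]_n => tapply A (v ord0) i)).
  exact: cvg_fst.
exact: continuous_tapply.
Qed.

Let continuous_eigen_rhs i :
  continuous (fun w : 'rV[R]_n * R => w.2 * w.1 ord0 i ^+ p).
Proof.
have cx : continuous (fun w : 'rV[R]_n * R => w.1 ord0 i).
  move=> w; apply: (cvg_comp fst (fun v : 'rV[R]_n => v ord0 i)); first exact: cvg_fst.
  exact: coord_continuous.
have cxp : continuous (fun w : 'rV[R]_n * R => w.1 ord0 i ^+ p).
  by move=> w; exact: (cvg_comp _ _ (cx w) (@exprn_continuous R p _)).
have c2 : continuous (fun w : 'rV[R]_n * R => w.2) by move=> w; exact: cvg_snd.
by move=> w; exact: (continuousM (c2 w) (cxp w)).
Qed.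

Lemma closed_subeigen (A : tensor R p.+1 n) :
  closed [set w : 'rV[R]_n * R | subeigen A w.2 (w.1 ord0)].
Proof.
have -> : [set w : 'rV[R]_n * R | subeigen A w.2 (w.1 ord0)] =
    \bigcap_i [set w : 'rV[R]_n * R | w.2 * w.1 ord0 i ^+ p <= tapply A (w.1 ord0) i].
  by apply/seteqP; split => [w hw i _ | w hw i]; [exact: hw | exact: hw].
by apply: closed_bigI => i _; apply: closed_ler.
Qed.

Lemma closed_supereigen (A : tensor R p.+1 n) :
  closed [set w : 'rV[R]_n * R | supereigen A w.2 (w.1 ord0)].
Proof.
have -> : [set w : 'rV[R]_n * R | supereigen A w.2 (w.1 ord0)] =
    \bigcap_i [set w : 'rV[R]_n * R | tapply A (w.1 ord0) i <= w.2 * w.1 ord0 i ^+ p].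
  by apply/seteqP; split => [w hw i _ | w hw i]; [exact: hw | exact: hw].
by apply: closed_bigI => i _; apply: closed_ler.
Qed.

Lemma compact_simplex : compact [set v : 'rV[R]_n | simplex (v ord0)].
Proof.
apply: (subclosed_compact _ (rV_compact (fun _ => @segment_compact R 0 1))).
  have -> : [set v : 'rV[R]_n | simplex (v ord0)] =
      \bigcap_j [set v : 'rV[R]_n | 0 <= v ord0 j] `&` [set v | \sum_j v ord0 j = 1].
    apply/seteqP; split => v [v0 v1]; first by split => // j _; exact: v0.
    by split => // j; exact: v0.
  apply: closedI.
    apply: closed_bigI => j _; apply: closed_ler; first exact: cst_continuous.
    exact: coord_continuous.
  apply: (@preimage_closed _ _ (fun v : 'rV[R]_n => \sum_j v ord0 j) [set x | x = 1]);
    last exact: closed_eq.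
  move=> v _; apply: continuous_big => [|j _]; first exact: add_continuous.
  exact: coord_continuous.
move=> v sv j /=; rewrite in_itv /=; apply/andP; split; first exact: sv.1.
exact: simplex_le1.
Qed.

Lemma simplex_cluster (a b : R) (x : nat -> 'I_n -> R) (mu : nat -> R) :
  (forall k, simplex (x k)) -> (forall k, a <= mu k <= b) ->
  exists y lam, [/\ simplex y, a <= lam <= b &
    forall P : ('I_n -> R) -> R -> Prop,
      closed [set w : 'rV[R]_n * R | P (w.1 ord0) w.2] ->
      (\forall k \near \oo, P (x k) (mu k)) -> P y lam].
Proof.
move=> sx hmu.
pose u k := (\row_j x k j, mu k).
have uE k : (u k).1 ord0 = x k by apply/funext => j; rewrite mxE.
have uK : (u @ \oo) ([set v : 'rV[R]_n | simplex (v ord0)] `*` `[a, b]).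
  by exists 0%N => // k _; split => /=; [rewrite uE | rewrite in_itv /= hmu].
have [[v lam] [[/= sv lamI] clu]] :=
  compact_setX compact_simplex (@segment_compact R a b) _ uK.
exists (v ord0), lam; split => //.
move=> P cP evP; apply: (cluster_closed clu cP).
by apply: filterS evP => k /=; rewrite uE.
Qed.

End SimplexCompactness.

Section NonnegativeEigenpair.
Variables (R : realType) (n p : nat).
Hypothesis p_gt0 : (0 < p)%N.
Implicit Types (A : tensor R p.+1 n) (x : 'I_n -> R).

Lemma positive_eigenpair A c x0 : (forall i t, 0 < A i t) ->
  simplex x0 -> subeigen A c x0 ->
  exists x mu, [/\ simplex x, c <= mu & eigenpair A mu x].
Proof.
move=> A_gt0 sx0 hx0.
have A_ge0 i t : 0 <= A i t by exact: ltW.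
pose S := [set mu | exists2 x, simplex x & subeigen A mu x].
have Sc : S c by exists x0.
have supS : has_sup S.
  split; first by exists c.
  exists (\sum_i tapply A (fun _ => 1) i) => mu [x sx hx].
  exact: subeigen_le_rowsum hx.
set ms := sup S.
have near_ms k : exists x, simplex x /\ subeigen A (ms - k.+1%:R^-1) x.
  have e0 : 0 < k.+1%:R^-1 :> R by rewrite invr_gt0.
  have [mu [x sx hx] lt_mu] := sup_adherent e0 supS.
  by exists x; split => //; apply: le_subeigen (ltW lt_mu) sx.1 hx.
have [x hx] := choice near_ms.
have [||y [lam [sy lamI cl]]] := @simplex_cluster R n (ms - 1) ms x (fun k => ms - k.+1%:R^-1).
- by move=> k; exact: (hx k).1.
- by move=> k; rewrite lerD2l lerN2 gerBl invr_ge0 ler0n invf_le1 ?ler1n.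
have hy : subeigen A lam y.
  apply: (cl (fun x mu => subeigen A mu x) (closed_subeigen (A := A))).
  by apply: nearW => k; exact: (hx k).2.
have lam_ms : lam = ms.
  apply/le_anti; rewrite (andP lamI).2 /=.
  apply: (ler_add_natSinv (c := 1)) => N; rewrite mulr1 -lerBlDr.
  have closedN : closed [set w : 'rV[R]_n * R | ms - N.+1%:R^-1 <= w.2].
    by apply: closed_ler => w; [exact: cvg_cst | exact: cvg_snd].
  apply: (cl (fun _ mu => ms - N.+1%:R^-1 <= mu) closedN).
  by exists N => // k /= le_Nk; rewrite lerD2l lerN2 lef_pV2 ?posrE // ler_nat.
exists y, ms; split => //; first exact: sup_upper_bound.
move=> i; apply/le_anti; rewrite -lam_ms hy andbT leNgt; apply/negP => lt_i.
have [mu' lt_mu' S_mu'] := subeigen_improve A_gt0 p_gt0 sy hy lt_i.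
by have := sup_upper_bound supS S_mu'; rewrite -/ms -lam_ms leNgt lt_mu'.
Qed.

Lemma tshift_eigenpair_limit A c M (x : nat -> 'I_n -> R) (mu : nat -> R) :
  (forall i t, 0 <= A i t) -> (forall k, simplex (x k)) -> (forall k, c <= mu k <= M) ->
  (forall k, eigenpair (tshift A k.+1%:R^-1) (mu k) (x k)) ->
  exists y lam, [/\ simplex y, c <= lam & eigenpair A lam y].
Proof.
move=> A_ge0 sx muI eig.
have e_ge0 k : 0 <= k.+1%:R^-1 :> R by rewrite invr_ge0.
have [y [lam [sy lamI cl]]] := simplex_cluster sx muI.
have super : supereigen A lam y.
  apply: (cl (fun x mu => supereigen A mu x) (closed_supereigen (A := A))).
  apply: nearW => k i; rewrite -eig.
  apply: (ler_tapply i A_ge0 _ (sx k).1 (fun _ => lexx _)) => j t.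
  exact: le_tshift.
have subN N : subeigen (tshift A N.+1%:R^-1) lam y.
  apply: (cl (fun x mu => subeigen (tshift A N.+1%:R^-1) mu x) (closed_subeigen (A := _))).
  exists N => // k /= le_Nk i; rewrite -eig.
  apply: (ler_tapply i (tshift_ge0 A_ge0 (e_ge0 k)) _ (sx k).1 (fun _ => lexx _)) => j t.
  by apply: ler_tshift; rewrite lef_pV2 ?posrE // ler_nat.
exists y, lam; split => //; first by case/andP: lamI.
move=> i; apply/le_anti; rewrite super /=.
apply: (ler_add_natSinv (c := tapply (m := p.+1) (fun _ _ => 1) y i)) => N.
by rewrite -tapply_tshift; exact: subN.
Qed.

Lemma nonneg_eigenpair A c x0 : (forall i t, 0 <= A i t) ->
  simplex x0 -> subeigen A c x0 ->
  exists x mu, [/\ simplex x, c <= mu & eigenpair A mu x].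
Proof.
move=> A_ge0 sx0 hx0.
have e_ge0 k : 0 <= k.+1%:R^-1 :> R by rewrite invr_ge0.
have pairs k : exists xm : ('I_n -> R) * R,
    [/\ simplex xm.1, c <= xm.2 & eigenpair (tshift A k.+1%:R^-1) xm.2 xm.1].
  have Ak_gt0 i t : 0 < tshift A k.+1%:R^-1 i t by rewrite ltr_wpDl // invr_gt0.
  have hk : subeigen (tshift A k.+1%:R^-1) c x0.
    move=> i; apply: le_trans (hx0 i) (ler_tapply i A_ge0 _ sx0.1 (fun _ => lexx _)).
    by move=> j t; exact: le_tshift.
  by have [x [mu hxmu]] := positive_eigenpair Ak_gt0 sx0 hk; exists (x, mu).
have [xm hxm] := choice pairs.
pose M := \sum_i tapply (tshift A 1) (fun _ => 1) i.
apply: (@tshift_eigenpair_limit A c M (fun k => (xm k).1) (fun k => (xm k).2)) => // k.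
- by have [] := hxm k.
- have [sx c_mu eig] := hxm k; rewrite c_mu /=.
  have hk : subeigen (tshift A k.+1%:R^-1) (xm k).2 (xm k).1 by move=> i; rewrite eig.
  apply: le_trans (subeigen_le_rowsum (tshift_ge0 A_ge0 (e_ge0 k)) sx hk) _.
  apply: ler_sum => i _.
  apply: (ler_tapply i (tshift_ge0 A_ge0 (e_ge0 k)) _ (fun _ => ler01) (fun _ => lexx _)).
  by move=> j t; apply: ler_tshift; rewrite invf_le1 ?ler1n.
- by have [] := hxm k.
Qed.

End NonnegativeEigenpair.

Section ComplexEigenvalues.
Variables (R : rcfType) (n p : nat).
Implicit Types (A : tensor R p.+1 n).

Lemma normc_ge0 (z : R[i]) : 0 <= normc z.
Proof. by case: z => a b; exact: sqrtr_ge0. Qed.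

Lemma normc_real (r : R) : normc (r%:C)%C = `|r|.
Proof. by rewrite /= expr0n /= addr0 sqrtr_sqr. Qed.

Lemma normcX (z : R[i]) k : normc (z ^+ k) = normc z ^+ k.
Proof.
elim: k => [|k IH]; first by rewrite !expr0 normc1.
by rewrite !exprS normcM IH.
Qed.

Lemma normc_prod (I : Type) (r : seq I) (F : I -> R[i]) :
  normc (\prod_(i <- r) F i) = \prod_(i <- r) normc (F i).
Proof.
by apply: (big_morph (@normc R)); [exact: normcM | exact: normc1].
Qed.

Lemma normc_sum (I : Type) (r : seq I) (F : I -> R[i]) :
  normc (\sum_(i <- r) F i) <= \sum_(i <- r) normc (F i).
Proof. exact: (@ler_norm_sum _ (Rcomplex R)). Qed.

Lemma normc_tapply A z i : (forall i t, 0 <= A i t) ->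
  normc (tapply (tensorC A) z i) <= tapply A (fun j => normc (z j)) i.
Proof.
move=> A_ge0; apply: le_trans (normc_sum _ _) _; apply: ler_sum => t _.
by rewrite normcM normc_real normc_prod ger0_norm.
Qed.

Lemma eigenvalue_collatz_wielandt A lam d : (forall i t, 0 <= A i t) ->
  (forall j, 0 < d j) -> is_eigenvalue (tensorC A) lam ->
  exists i, normc lam * d i ^+ p <= tapply A d i.
Proof.
move=> A_ge0 d_gt0 [z [[j zj] eig]].
apply: (collatz_wielandt (x := fun j => normc (z j))) => //.
- by move=> ?; exact: normc_ge0.
- exists j; rewrite lt0r normc_ge0 andbT.
  by apply: contra zj => /eqP/eq0_normc ->.
- by move=> i; rewrite -normcX -normcM -eig; exact: normc_tapply.
Qed.

Lemma eigenpair_eigenvalue A mu x : (exists j, x j != 0) ->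
  eigenpair A mu x -> is_eigenvalue (tensorC A) (mu%:C)%C.
Proof.
move=> [j xj] eig; exists (fun j => (x j)%:C%C); split; first by exists j; rewrite fmorph_eq0.
move=> i; rewrite -rmorphXn -rmorphM -eig /tapply rmorph_sum.
by apply: eq_bigr => t _; rewrite rmorphM rmorph_prod.
Qed.

End ComplexEigenvalues.

Lemma sum_tuple_prod (R : comSemiRingType) (p : nat) (J : finType) (F : 'I_p -> J -> R) :
  \sum_(t : p.-tuple J) \prod_(j < p) F j (tnth t j) = \prod_(j < p) \sum_(b : J) F j b.
Proof.
rewrite bigA_distr_bigA /= (reindex (fun f : {ffun 'I_p -> J} => [tuple f j | j < p])) /=.
  by apply: eq_bigr => f _; apply: eq_bigr => j _; rewrite tnth_mktuple.
exists (fun t : p.-tuple J => [ffun j => tnth t j]) => [f _ | t _].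
  by apply/ffunP => j; rewrite ffunE tnth_mktuple.
by apply: eq_from_tnth => j; rewrite tnth_mktuple ffunE.
Qed.

Lemma rowsum_tprod (R : numDomainType) m k n (A : tensor R m n) (B : tensor R k n) i :
  (forall i t, 0 <= A i t) -> (forall i t, 0 <= B i t) ->
  rowsum (tprod A B) i = tapply A (rowsum B) i.
Proof.
move=> A_ge0 B_ge0; rewrite /rowsum /tprod /tapply.
have c_ge0 alpha : 0 <= \sum_t A i t * \prod_(j < m.-1) B (tnth t j) (tnth alpha j).
  by apply: sumr_ge0 => t _; apply: mulr_ge0 => //; apply: prodr_ge0.
under eq_bigr => alpha _ do rewrite ger0_norm ?c_ge0 //.
rewrite exchange_big /=; apply: eq_bigr => t _.
rewrite -mulr_sumr (sum_tuple_prod (fun j b => B (tnth t j) b)).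
by congr (_ * _); apply: eq_bigr => j _; apply: eq_bigr => b _; rewrite ger0_norm.
Qed.

Theorem theorem3p1 (R : realType) (m k n : nat) (hm : (2 <= m)%N) (hk : (1 <= k)%N) (hn : (0 < n)%N)
  (A : tensor R m n) (B : tensor R k n)
  (hA : forall i t, 0 <= A i t) (hB : forall i t, 0 <= B i t)
  (hrB : forall i, rowsum B i != 0) :
  let ratio := fun i : 'I_n => rowsum (tprod A B) i / rowsum B i ^+ (m - 1)%N in
  \big[Num.min/ratio (Ordinal hn)]_(i < n) ratio i <= spectral_radius A /\
  spectral_radius A <= \big[Num.max/ratio (Ordinal hn)]_(i < n) ratio i.
Proof.
case: m hm A hA => [//|p] p_gt0 A hA ratio.
pose d := rowsum B.
have d_gt0 j : 0 < d j by rewrite lt0r hrB; apply: sumr_ge0 => t _.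
have ratioE i : ratio i = tapply A d i / d i ^+ p by rewrite /ratio rowsum_tprod // subn1.
set lo := \big[Num.min/_]_(i < n) _; set hi := \big[Num.max/_]_(i < n) _.
have lo_sub : subeigen A lo d.
  move=> i; have := bigmin_le (ratio (Ordinal hn)) i ratio.
  by rewrite -/lo ratioE ler_pdivlMr ?exprn_gt0.
have le_hi lam : is_eigenvalue (tensorC A) lam -> normc lam <= hi.
  move=> /(eigenvalue_collatz_wielandt hA d_gt0) [i hi_i].
  by apply: le_trans (le_bigmax _ _ i); rewrite ratioE ler_pdivlMr ?exprn_gt0.
have [x0 sx0 hx0] :=
  subeigen_normalize (fun j => ltW (d_gt0 j)) (ex_intro _ (Ordinal hn) (d_gt0 _)) lo_sub.
have [x [mu [sx lo_mu eig]]] := nonneg_eigenpair p_gt0 hA sx0 hx0.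
have [j xj] := simplex_gt0 sx.
have mu_eig := eigenpair_eigenvalue (ex_intro _ j (lt0r_neq0 xj)) eig.
rewrite /spectral_radius; set E := (X in sup X).
have E_mu : E (normc (mu%:C)%C) by exists (mu%:C)%C.
have ub_hi : ubound E hi by move=> _ [l /le_hi hl <-].
split; last exact: ge_sup (ex_intro _ _ E_mu) ub_hi.
have supE : has_sup E by split; [exists (normc (mu%:C)%C) | exists hi].
apply: le_trans lo_mu (le_trans (ler_norm mu) _).
by rewrite -normc_real; exact: sup_upper_bound supE _ E_mu.
Qed.
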